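(* Let $\mathcal{D}$ be a dagger category. (1) $\mathcal{D}$ is maximal if and only if every self-adjoint automorphism is iso-positive. (2) $\mathcal{D}$ is minimal if and only if every iso-positive endomorphism is aut-positive.
   Context: A dagger category is a category with an identity-on-objects functor $\dagger$ to its opposite with $f^{\dagger\dagger}=f$. $f$ is self-adjoint if $f^\dagger=f$; an isomorphism $u$ is unitary if $u^\dagger=u^{-1}$. An endomorphism $f\colon c\to c$ is iso-positive if $f=g^\dagger g$ for some isomorphism $g\colon c\to c'$, aut-positive if $f=g^\dagger g$ for some automorphism $g$ of $c$. $\mathcal{D}$ is minimal if the map from unitary-isomorphism classes of objects to isomorphism classes of objects is bijective. $\mathcal{D}$ is maximal if it is dagger-equivalent to a Hermitian completion $\mathrm{Herm}\,\mathcal{C}$ of an anti-involutive category $(\mathcal{C},d,\eta)$ (where $d\colon\mathcal{C}\to\mathcal{C}^{\mathrm{op}}$, $\eta\colon\mathrm{id}\Rightarrow d^2$ with $d(\eta_c)\circ\eta_{dc}=\mathrm{id}$; $\mathrm{Herm}\,\mathcal{C}$ has objects pairs $(c,h)$ with $h\colon c\to dc$ an isomorphism satisfying $d(h)\circ\eta_c=h$, morphisms all morphisms of $\mathcal{C}$, and dagger $f^\dagger=h_1^{-1}\circ d(f)\circ h_2$). *)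

From Stdlib Require Import Setoid.
Set Implicit Arguments.

(** * Categories (hom-types with Leibniz equality of morphisms) *)
Record Category := {
  Ob :> Type;
  Hom : Ob -> Ob -> Type;
  idm : forall a, Hom a a;
  comp : forall a b c, Hom b c -> Hom a b -> Hom a c;
  comp_idl : forall a b (f : Hom a b), comp (idm b) f = f;
  comp_idr : forall a b (f : Hom a b), comp f (idm a) = f;
  comp_assoc : forall a b c e (f : Hom a b) (g : Hom b c) (h : Hom c e),
      comp h (comp g f) = comp (comp h g) f
}.
Arguments Hom {_} a b.
Arguments idm {_} a.
Arguments comp {_ _ _ _} g f.
Arguments comp_idl {_ _ _} f.
Arguments comp_idr {_ _ _} f.
Arguments comp_assoc {_ _ _ _ _} f g h.

Definition is_iso {C : Category} {a b : C} (f : Hom a b) : Prop :=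
  exists g : Hom b a, comp g f = idm a /\ comp f g = idm b.

Record DaggerCategory := {
  dcat :> Category;
  dag : forall a b : dcat, Hom a b -> Hom b a;
  dag_id : forall a : dcat, dag a a (idm a) = idm a;
  dag_comp : forall (a b c : dcat) (f : Hom a b) (g : Hom b c),
      dag a c (comp g f) = comp (dag a b f) (dag b c g);
  dag_invol : forall (a b : dcat) (f : Hom a b), dag b a (dag a b f) = f
}.
Arguments dag {d a b} f.

Section DaggerNotions.
Variable D : DaggerCategory.

Definition self_adjoint {a : D} (f : Hom a a) : Prop := dag f = f.

Definition unitary {a b : D} (u : Hom a b) : Prop :=
  comp (dag u) u = idm a /\ comp u (dag u) = idm b.

Definition isomorphic (a b : D) : Prop := exists f : Hom a b, is_iso f.
Definition unitarily_isomorphic (a b : D) : Prop := exists u : Hom a b, unitary u.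

Definition iso_positive {c : D} (f : Hom c c) : Prop :=
  exists (c' : D) (g : Hom c c'), is_iso g /\ f = comp (dag g) g.

Definition aut_positive {c : D} (f : Hom c c) : Prop :=
  exists g : Hom c c, is_iso g /\ f = comp (dag g) g.

(** The canonical map {objects}/(unitary iso) -> {objects}/(iso), [a] |-> [a],
    is bijective: injective and surjective, written out on representatives. *)
Definition minimal : Prop :=
  (forall a b : D, isomorphic a b -> unitarily_isomorphic a b) /\
  (forall a : D, exists b : D, isomorphic b a).
End DaggerNotions.
Arguments self_adjoint {D a} f.
Arguments unitary {D a b} u.
Arguments isomorphic {D} a b.
Arguments unitarily_isomorphic {D} a b.
Arguments iso_positive {D c} f.
Arguments aut_positive {D c} f.

Record AntiInvolution (C : Category) := {
  dob : C -> C;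
  dmap : forall a b : C, Hom a b -> Hom (dob b) (dob a);
  dmap_id : forall a : C, dmap a a (idm a) = idm (dob a);
  dmap_comp : forall (a b c : C) (f : Hom a b) (g : Hom b c),
      dmap a c (comp g f) = comp (dmap a b f) (dmap b c g);
  eta : forall a : C, Hom a (dob (dob a));
  eta_nat : forall (a b : C) (f : Hom a b),
      comp (dmap _ _ (dmap a b f)) (eta a) = comp (eta b) f;
  eta_triangle : forall a : C,
      comp (dmap _ _ (eta a)) (eta (dob a)) = idm (dob a)
}.
Arguments dob {C} _ a.
Arguments dmap {C} _ {a b} f.
Arguments eta {C} _ a.

Section Herm.
Variables (C : Category) (A : AntiInvolution C).

Record HermObj := {
  hc : C;
  hh : Hom hc (dob A hc);
  hinv : Hom (dob A hc) hc;
  hinv_hh : comp hinv hh = idm hc;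
  hh_hinv : comp hh hinv = idm (dob A hc);
  hh_herm : comp (dmap A hh) (eta A hc) = hh
}.

Definition HermCat : Category.
Proof.
  refine {| Ob := HermObj;
            Hom := fun x y => @Hom C (hc x) (hc y);
            idm := fun x => idm (hc x);
            comp := fun x y z g f => comp g f |}.
  - intros; apply comp_idl.
  - intros; apply comp_idr.
  - intros; apply comp_assoc.
Defined.

Definition herm_dag (x y : HermCat) (f : Hom x y) : Hom y x :=
  @comp C _ _ _ (hinv x) (@comp C _ _ _ (dmap A f) (hh y)).

Lemma dmap_iso_l (x : HermObj) :
  comp (dmap A (hinv x)) (dmap A (hh x)) = idm (dob A (dob A (hc x))).
Proof. rewrite <- dmap_comp, hh_hinv, dmap_id. reflexivity. Qed.

Lemma dmap_iso_r (x : HermObj) :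
  comp (dmap A (hh x)) (dmap A (hinv x)) = idm (dob A (hc x)).
Proof. rewrite <- dmap_comp, hinv_hh, dmap_id. reflexivity. Qed.

Lemma eta_herm (x : HermObj) : eta A (hc x) = comp (dmap A (hinv x)) (hh x).
Proof.
  rewrite <- (hh_herm x) at 1. rewrite comp_assoc, dmap_iso_l, comp_idl.
  reflexivity.
Qed.

Lemma eta_herm_inv (x : HermObj) :
  comp (comp (hinv x) (dmap A (hh x))) (eta A (hc x)) = idm (hc x).
Proof. rewrite <- comp_assoc, hh_herm, hinv_hh. reflexivity. Qed.

Lemma eta_herm_inv' (x : HermObj) :
  comp (eta A (hc x)) (comp (hinv x) (dmap A (hh x))) = idm _.
Proof.
  rewrite eta_herm, comp_assoc, <- (comp_assoc (hinv x)), hh_hinv, comp_idr.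
  apply dmap_iso_l.
Qed.

Definition Herm : DaggerCategory.
Proof.
  refine {| dcat := HermCat; dag := herm_dag |}.
  - intros a. unfold herm_dag; simpl.
    rewrite dmap_id, comp_idl. apply hinv_hh.
  - intros a b c f g. unfold herm_dag; simpl.
    rewrite dmap_comp.
    rewrite <- !comp_assoc. f_equal. f_equal.
    rewrite (comp_assoc _ (hinv b) (hh b)), hh_hinv, comp_idl. reflexivity.
  - intros a b f. unfold herm_dag; simpl.
    rewrite !dmap_comp.
    rewrite <- !comp_assoc.
    rewrite <- (eta_herm a), eta_nat.
    rewrite !comp_assoc, eta_herm_inv.
    apply comp_idl.
Defined.
End Herm.

Record DaggerFunctor (D E : DaggerCategory) := {
  fob : D -> E;
  fmap : forall a b : D, Hom a b -> Hom (fob a) (fob b);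
  fmap_id : forall a : D, fmap a a (idm a) = idm (fob a);
  fmap_comp : forall (a b c : D) (f : Hom a b) (g : Hom b c),
      fmap a c (comp g f) = comp (fmap b c g) (fmap a b f);
  fmap_dag : forall (a b : D) (f : Hom a b), fmap b a (dag f) = dag (fmap a b f)
}.
Arguments fob {D E} _ a.
Arguments fmap {D E} _ {a b} f.

Definition dagger_equivalence {D E : DaggerCategory} (F : DaggerFunctor D E) : Prop :=
  (forall (a b : D) (g : Hom (fob F a) (fob F b)), exists f : Hom a b, fmap F f = g) /\
  (forall (a b : D) (f f' : Hom a b), fmap F f = fmap F f' -> f = f') /\
  (forall e : E, exists (a : D) (u : Hom (fob F a) e), unitary u).

Definition dagger_equivalent (D E : DaggerCategory) : Prop :=
  exists F : DaggerFunctor D E, dagger_equivalence F.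

Definition maximal (D : DaggerCategory) : Prop :=
  exists (C : Category) (A : AntiInvolution C), dagger_equivalent D (Herm A).


(* (1) In [Herm C], a self-adjoint automorphism [p] of [(c, h)] is [i^dagger i]
   for the identity [i : (c, h) -> (c, h p)].  This transports along a dagger
   equivalence, since replacing [g] by [u^dagger g] with [u] unitary does not
   change [g^dagger g].  Conversely [D] embeds fully faithfully into [Herm] of
   [(D, dagger, id)], whose objects are [(c, h)] with [h] a self-adjoint
   automorphism; writing [h = g^dagger g] makes [g^-1 : (c', id) -> (c, h)]
   unitary.
   (2) If [g : c -> c'] is invertible and [u : c -> c'] unitary, then
   [u^dagger g] is an automorphism with the same [g^dagger g]; conversely, if
   [g^dagger g = h^dagger h] with [h] an automorphism, then [g h^-1] is unitary. *)

Section CategoryFacts.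
Context {C : Category}.

Lemma is_iso_id (a : C) : is_iso (idm a).
Proof. exists (idm a). split; apply comp_idl. Qed.

Lemma comp_cancel_r {a b c : C} (h : Hom a c) (x : Hom b a) (y : Hom a b) :
  comp x y = idm a -> comp (comp h x) y = h.
Proof. intros Hxy. rewrite <- comp_assoc, Hxy, comp_idr. reflexivity. Qed.

Lemma is_iso_comp {a b c : C} {g : Hom a b} {h : Hom b c} :
  is_iso g -> is_iso h -> is_iso (comp h g).
Proof.
  intros [gi [Hg1 Hg2]] [hi [Hh1 Hh2]].
  exists (comp gi hi). split; rewrite !comp_assoc.
  - rewrite (comp_cancel_r _ _ _ Hh1). exact Hg1.
  - rewrite (comp_cancel_r _ _ _ Hg2). exact Hh2.
Qed.

Lemma is_iso_linv_rinv {a b : C} {g : Hom a b} {k : Hom b a} :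
  is_iso g -> comp k g = idm a -> comp g k = idm b.
Proof.
  intros [gi [Hg1 Hg2]] Hkg.
  assert (Hk : k = gi).
  { rewrite <- (comp_idr k), <- Hg2, comp_assoc, Hkg, comp_idl. reflexivity. }
  rewrite Hk. exact Hg2.
Qed.

End CategoryFacts.

Section DaggerFacts.
Context {D : DaggerCategory}.

Lemma unitary_is_iso_dag {a b : D} {u : Hom a b} : unitary u -> is_iso (dag u).
Proof. intros [Hu1 Hu2]. exists u. split; assumption. Qed.

Lemma unitary_of_iso_isometry {a b : D} (u : Hom a b) :
  is_iso u -> comp (dag u) u = idm a -> unitary u.
Proof. intros Hu Hisom. split; [exact Hisom | exact (is_iso_linv_rinv Hu Hisom)]. Qed.

Lemma positive_comp_dag_unitary {a b c : D} (g : Hom a b) {u : Hom c b} :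
  unitary u -> comp (dag (comp (dag u) g)) (comp (dag u) g) = comp (dag g) g.
Proof.
  intros [_ Hu2].
  rewrite dag_comp, dag_invol, comp_assoc, (comp_cancel_r _ _ _ Hu2).
  reflexivity.
Qed.

Lemma iso_positive_retarget {a b c : D} {g : Hom a b} {u : Hom c b} :
  is_iso g -> unitary u ->
  exists k : Hom a c, is_iso k /\ comp (dag g) g = comp (dag k) k.
Proof.
  intros Hg Hu. exists (comp (dag u) g). split.
  - exact (is_iso_comp Hg (unitary_is_iso_dag Hu)).
  - symmetry. exact (positive_comp_dag_unitary g Hu).
Qed.

Lemma unitarily_isomorphic_of_positive_eq {a b c : D} {g : Hom a b} {h : Hom a c} :
  is_iso g -> is_iso h -> comp (dag g) g = comp (dag h) h ->
  unitarily_isomorphic c b.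
Proof.
  intros Hg Hh Heq. destruct Hh as [hi [Hh1 Hh2]].
  exists (comp g hi). apply unitary_of_iso_isometry.
  - apply is_iso_comp; [exists h; split; assumption | exact Hg].
  - rewrite dag_comp, <- comp_assoc, (comp_assoc hi g), Heq, !comp_assoc,
      <- dag_comp, Hh2, dag_id, comp_idl.
    exact Hh2.
Qed.

End DaggerFacts.

Lemma minimal_iff_iso_positive_aut_positive (D : DaggerCategory) :
  minimal D <-> forall (c : D) (f : Hom c c), iso_positive f -> aut_positive f.
Proof.
  split.
  - intros [Hunit _] c f [c' [g [Hg ->]]].
    destruct (Hunit c c' (ex_intro _ g Hg)) as [u Hu].
    exact (iso_positive_retarget Hg Hu).
  - intros Hpos. split.
    + intros a b [g Hg].
      destruct (Hpos a (comp (dag g) g) (ex_intro _ b (ex_intro _ g (conj Hg eq_refl))))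
        as [h [Hh Heq]].
      exact (unitarily_isomorphic_of_positive_eq Hg Hh Heq).
    + intros a. exists a, (idm a). apply is_iso_id.
Qed.

Section Hermitian.
Context {C : Category} (A : AntiInvolution C).

Lemma herm_self_adjoint_intertwines (X : Herm A) (p : Hom X X) :
  self_adjoint p -> comp (dmap A p) (hh X) = comp (hh X) p.
Proof.
  intros Hsa. rewrite <- Hsa at 2. cbn. unfold herm_dag.
  rewrite comp_assoc, hh_hinv, comp_idl. reflexivity.
Qed.

Definition herm_twist (X : HermObj A) {p pi : Hom (hc X) (hc X)}
  (Hpi : comp pi p = idm _) (Hp : comp p pi = idm _)
  (Hs : comp (dmap A p) (hh X) = comp (hh X) p) : HermObj A.
Proof.
  refine (@Build_HermObj C A (hc X) (comp (hh X) p) (comp pi (hinv X)) _ _ _).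
  - rewrite comp_assoc, (comp_cancel_r _ _ _ (hinv_hh X)). exact Hpi.
  - rewrite comp_assoc, (comp_cancel_r _ _ _ Hp). exact (hh_hinv X).
  - rewrite dmap_comp, <- comp_assoc, hh_herm. exact Hs.
Defined.

Lemma herm_dag_id_twist (X : HermObj A) {p pi : Hom (hc X) (hc X)}
  (Hpi : comp pi p = idm _) (Hp : comp p pi = idm _)
  (Hs : comp (dmap A p) (hh X) = comp (hh X) p) :
  @dag (Herm A) X (herm_twist X Hpi Hp Hs) (idm (hc X)) = p.
Proof.
  cbn. unfold herm_dag. cbn.
  rewrite dmap_id, comp_idl, comp_assoc, hinv_hh, comp_idl. reflexivity.
Qed.

Lemma herm_self_adjoint_iso_positive (X : Herm A) (p : Hom X X) :
  self_adjoint p -> is_iso p -> iso_positive p.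
Proof.
  intros Hsa [pi [Hpi Hp]].
  exists (herm_twist X Hpi Hp (herm_self_adjoint_intertwines _ _ Hsa)), (idm (hc X)).
  split.
  - exact (is_iso_id (hc X)).
  - rewrite herm_dag_id_twist. symmetry. exact (@comp_idr C _ _ p).
Qed.

End Hermitian.

Section DaggerFunctors.
Context {D E : DaggerCategory} (F : DaggerFunctor D E).

Lemma fmap_self_adjoint {c : D} (f : Hom c c) :
  self_adjoint f -> self_adjoint (fmap F f).
Proof. intros Hf. unfold self_adjoint. rewrite <- fmap_dag, Hf. reflexivity. Qed.

Lemma fmap_is_iso {a b : D} (f : Hom a b) : is_iso f -> is_iso (fmap F f).
Proof.
  intros [fi [Hf1 Hf2]]. exists (fmap F fi).
  split; rewrite <- fmap_comp, <- fmap_id; f_equal; assumption.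
Qed.

Hypothesis F_full : forall (a b : D) (g : Hom (fob F a) (fob F b)),
  exists f : Hom a b, fmap F f = g.
Hypothesis F_faithful : forall (a b : D) (f f' : Hom a b),
  fmap F f = fmap F f' -> f = f'.

Lemma full_faithful_reflects_iso {a b : D} (f : Hom a b) :
  is_iso (fmap F f) -> is_iso f.
Proof.
  intros [gi [Hg1 Hg2]]. destruct (F_full _ _ gi) as [fi Hfi].
  exists fi. split; apply F_faithful;
    rewrite fmap_comp, fmap_id, Hfi; assumption.
Qed.

Hypothesis F_unitarily_ess_surj : forall e : E,
  exists (a : D) (u : Hom (fob F a) e), unitary u.

Lemma fmap_iso_positive_reflect {c : D} (f : Hom c c) :
  iso_positive (fmap F f) -> iso_positive f.
Proof.
  intros [e [g [Hg Hf]]].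
  destruct (F_unitarily_ess_surj e) as [a [u Hu]].
  destruct (iso_positive_retarget Hg Hu) as [k [Hk Hgk]].
  destruct (F_full _ _ k) as [g' Hg'].
  exists a, g'. split.
  - apply full_faithful_reflects_iso. rewrite Hg'. exact Hk.
  - apply F_faithful. rewrite Hf, Hgk, fmap_comp, fmap_dag, Hg'. reflexivity.
Qed.

End DaggerFunctors.

Lemma maximal_self_adjoint_iso_positive (D : DaggerCategory) :
  maximal D -> forall (c : D) (f : Hom c c), self_adjoint f -> is_iso f -> iso_positive f.
Proof.
  intros [C [A [F [Hfull [Hfaith Hess]]]]] c f Hsa Hf.
  apply (fmap_iso_positive_reflect F Hfull Hfaith Hess).
  apply herm_self_adjoint_iso_positive.
  - exact (fmap_self_adjoint F f Hsa).
  - exact (fmap_is_iso F f Hf).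
Qed.

Section HermEmbedding.
Variable D : DaggerCategory.

Definition dagger_anti_involution : AntiInvolution D.
Proof.
  refine {| dob := fun a => a; dmap := fun a b f => @dag D a b f;
            eta := fun a => idm a |}.
  - intros; apply dag_id.
  - intros; apply dag_comp.
  - intros. cbn. rewrite dag_invol, comp_idr, comp_idl. reflexivity.
  - intros. cbn. rewrite dag_id. apply comp_idl.
Defined.

Definition herm_embed_ob (a : D) : HermObj dagger_anti_involution.
Proof.
  refine (@Build_HermObj D dagger_anti_involution a (idm a) (idm a) _ _ _); cbn.
  - apply comp_idl.
  - apply comp_idl.
  - rewrite dag_id. apply comp_idl.
Defined.

Definition herm_embed : DaggerFunctor D (Herm dagger_anti_involution).
Proof.
  refine (@Build_DaggerFunctor D (Herm dagger_anti_involution) herm_embed_ob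
            (fun a b f => f) _ _ _).
  - reflexivity.
  - reflexivity.
  - intros a b f. cbn. unfold herm_dag. cbn. rewrite comp_idl, comp_idr. reflexivity.
Defined.

Lemma herm_form_self_adjoint (e : HermObj dagger_anti_involution) :
  @self_adjoint D (hc e) (hh e).
Proof. pose proof (hh_herm e) as He. cbn in He. rewrite comp_idr in He. exact He. Qed.

Lemma herm_embed_unitary_of_form_positive (e : HermObj dagger_anti_involution)
  {c : D} {g : Hom (hc e) c} :
  is_iso g -> hh e = comp (dag g) g ->
  exists u : Hom (fob herm_embed c) e, unitary u.
Proof.
  intros [gi [Hg1 Hg2]] Hh. exists gi.
  assert (Hdag : @dag (Herm dagger_anti_involution) (fob herm_embed c) e gi = g).
  { cbn. unfold herm_dag. cbn. rewrite comp_idl, Hh, comp_assoc, <- dag_comp, Hg2,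
      dag_id, comp_idl.
    reflexivity. }
  split; rewrite Hdag; assumption.
Qed.

Lemma herm_embed_dagger_equivalence :
  (forall (c : D) (f : Hom c c), self_adjoint f -> is_iso f -> iso_positive f) ->
  dagger_equivalence herm_embed.
Proof.
  intros Hpos. split; [|split].
  - intros a b g. exists g. reflexivity.
  - intros a b f f' Hff'. exact Hff'.
  - intros e.
    assert (Hiso : is_iso (hh e)).
    { exists (hinv e). split; [exact (hinv_hh e) | exact (hh_hinv e)]. }
    destruct (Hpos _ _ (herm_form_self_adjoint e) Hiso) as [c [g [Hg Hh]]].
    exists c. exact (herm_embed_unitary_of_form_positive e Hg Hh).
Qed.

End HermEmbedding.

Theorem mainTheorem10 (D : DaggerCategory) :
  (maximal D <->
     forall (c : D) (f : Hom c c), self_adjoint f -> is_iso f -> iso_positive f) /\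
  (minimal D <->
     forall (c : D) (f : Hom c c), iso_positive f -> aut_positive f).
Proof.
  split.
  - split.
    + apply maximal_self_adjoint_iso_positive.
    + intros Hpos. exists D, (dagger_anti_involution D), (herm_embed D).
      exact (herm_embed_dagger_equivalence D Hpos).
  - apply minimal_iff_iso_positive_aut_positive.
Qed.
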